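(* Let $G$ be a finite abstract simplicial complex such that all unit spheres $S(x)$, $x\in G$, have the same Euler characteristic $w(S(x))=c$. Then either $w(G)=0$ or $w(S(x))=0$ for all $x \in G$.
   Context: A finite abstract simplicial complex $G$ is a finite set of non-empty finite sets closed under taking non-empty subsets. For $x\in G$, $w(x)=(-1)^{|x|-1}$, and for $A\subset G$, $w(A)=\sum_{y\in A}w(y)$ (Euler characteristic). For $x\in G$: $U(x)=\{y\in G: x\subset y\}$, $B(x)=\{y\in G : y\subset z \text{ for some } z\in U(x)\}$ (the closure of $U(x)$ in the topology with basis the sets $U(x)$), and the unit sphere $S(x)=B(x)\setminus U(x)$. *)

From mathcomp Require Import all_boot all_order all_algebra.
Set Implicit Arguments. Unset Strict Implicit. Unset Printing Implicit Defensive.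
Import GRing.Theory Num.Theory.
Local Open Scope ring_scope.

Definition is_complex (T : finType) (G : {set {set T}}) : Prop :=
  (forall x, x \in G -> x != set0) /\
  (forall x y : {set T}, x \in G -> y \subset x -> y != set0 -> y \in G).

Definition wsimp (T : finType) (x : {set T}) : int := (-1) ^+ (#|x|.-1).

Definition wset (T : finType) (A : {set {set T}}) : int :=
  \sum_(y in A) wsimp y.

Definition Ustar (T : finType) (G : {set {set T}}) (x : {set T}) : {set {set T}} :=
  [set y in G | x \subset y].

Definition Bclos (T : finType) (G : {set {set T}}) (x : {set T}) : {set {set T}} :=
  [set y in G | [exists z in Ustar G x, y \subset z]].

Definition Sphere (T : finType) (G : {set {set T}}) (x : {set T}) : {set {set T}} :=
  Bclos G x :\: Ustar G x.

From mathcomp Require Import all_boot all_order all_algebra.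
Set Implicit Arguments. Unset Strict Implicit. Unset Printing Implicit Defensive.
Import GRing.Theory Num.Theory.
Local Open Scope ring_scope.

(* Every ball B(x) is a cone: adding or removing a vertex v of x keeps a
   face inside a simplex z containing x.  Toggling v is a sign-reversing
   involution, so w(B(x)) = 1, and likewise the faces of a simplex have
   total weight 1.  Since U(x) is contained in B(x), w(S(x)) = 1 - w(U(x)),
   and exchanging sums gives sum_x w(x) w(U(x)) = sum_y w(y) = w(G), whence
   sum_x w(x) w(S(x)) = 0.  If every sphere has weight c this reads
   c w(G) = 0. *)

Section Toggle.

Variable T : finType.
Implicit Types (v : T) (y z : {set T}) (A : {set {set T}}).

Definition toggle v y : {set T} := if v \in y then y :\ v else v |: y.

Lemma toggleK v : involutive (toggle v).
Proof.
move=> y; rewrite /toggle; case: (boolP (v \in y)) => vy.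
  by rewrite !inE eqxx /= setD1K.
by rewrite setU11 setU1K.
Qed.

Lemma sign_toggle v y : (-1) ^+ #|toggle v y| = - (-1) ^+ #|y| :> int.
Proof.
rewrite /toggle; case: ifP => vy.
  by rewrite [in RHS](cardsD1 v) vy exprS mulN1r opprK.
by rewrite cardsU1 vy exprS mulN1r.
Qed.

Lemma toggle_subset v y z : v \in z -> y \subset z -> toggle v y \subset z.
Proof.
move=> vz yz; rewrite /toggle; case: ifP => _.
  exact: subset_trans (subD1set _ _) yz.
by rewrite subUset sub1set vz.
Qed.

Lemma sum_sign_toggle_closed v A :
  (forall y, y \in A -> toggle v y \in A) ->
  \sum_(y in A) (-1) ^+ #|y| = 0 :> int.
Proof.
move=> closedA; set S := \sum_(y in A) _.
have mem_toggle y : (toggle v y \in A) = (y \in A).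
  by apply/idP/idP => [/closedA|/closedA //]; rewrite toggleK.
have SN : S = - S.
  rewrite {1}/S (reindex_inj (can_inj (toggleK v))) /= -sumrN.
  by apply: eq_big => [y|y _]; rewrite ?mem_toggle ?sign_toggle.
apply/eqP; have := mulrn_eq0 S 2.
by rewrite mulr2n {1}SN addNr eqxx.
Qed.

Lemma wsimpE y : y != set0 -> wsimp y = - (-1) ^+ #|y|.
Proof.
rewrite -card_gt0 /wsimp; case: #|y| => // n _.
by rewrite exprS mulN1r opprK.
Qed.

Lemma wset_cone v A : set0 \notin A ->
  (forall y, y \in set0 |: A -> toggle v y \in set0 |: A) -> wset A = 1.
Proof.
move=> A0 closedA; have := sum_sign_toggle_closed closedA.
have signE y : y \in A -> (-1) ^+ #|y| = - wsimp y.
  by move=> yA; rewrite wsimpE ?opprK //; apply: contraNneq A0 => <-.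
rewrite big_setU1 //= cards0 expr0 (eq_bigr _ signE) sumrN.
by move=> /eqP; rewrite subr_eq0 /wset => /eqP <-.
Qed.

Lemma wset_setD A (B : {set {set T}}) :
  A \subset B -> wset (B :\: A) = wset B - wset A.
Proof.
by move=> /setIidPr AB; rewrite /wset [in RHS](big_setID A) /= AB addrAC subrr add0r.
Qed.

End Toggle.

Section Complex.

Variables (T : finType) (G : {set {set T}}).
Hypothesis complexG : is_complex G.
Implicit Types x y z : {set T}.

Lemma set0_notin_complex : set0 \notin G.
Proof. by apply/negP => /complexG.1; rewrite eqxx. Qed.

Lemma wset_faces y : y \in G -> wset [set x in G | x \subset y] = 1.
Proof.
move=> yG; have /set0Pn [v vy] := complexG.1 _ yG.
have memF x : (x \in set0 |: [set x in G | x \subset y]) = (x \subset y).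
  rewrite !inE; case: eqP => [->|/eqP x0]; first by rewrite sub0set.
  by case: (boolP (x \subset y)) => xy; rewrite ?andbT ?andbF ?(complexG.2 _ _ yG xy x0).
apply: (@wset_cone _ v).
  by rewrite inE (negbTE set0_notin_complex).
by move=> x; rewrite !memF; apply: toggle_subset.
Qed.

Lemma wset_Bclos x : x \in G -> wset (Bclos G x) = 1.
Proof.
move=> xG; have /set0Pn [v vx] := complexG.1 _ xG.
have memB y :
    (y \in set0 |: Bclos G x) = (y == set0) || [exists z in Ustar G x, y \subset z].
  rewrite !inE; case: eqP => [//|/eqP y0] /=.
  apply/andP/idP => [[] //|exy]; split=> //.
  have /existsP [z /andP [zU yz]] := exy; move: zU; rewrite inE => /andP [zG _].
  exact: complexG.2 _ _ zG yz y0.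
apply: (@wset_cone _ v).
  by rewrite inE (negbTE set0_notin_complex).
move=> y; rewrite !memB => /orP [/eqP ->|/existsP [z /andP [zU yz]]]; apply/orP; right.
  apply/existsP; exists x.
  by rewrite !inE xG subxx /= /toggle inE setU0 sub1set vx.
apply/existsP; exists z; rewrite zU; move: zU; rewrite inE => /andP [_ xz].
exact: toggle_subset (subsetP xz v vx) yz.
Qed.

Lemma Ustar_sub_Bclos x : Ustar G x \subset Bclos G x.
Proof.
apply/subsetP => y; rewrite !inE => /andP [yG xy].
by rewrite yG; apply/existsP; exists y; rewrite !inE yG xy subxx.
Qed.

Lemma wset_Sphere x : x \in G -> wset (Sphere G x) = 1 - wset (Ustar G x).
Proof. by move=> xG; rewrite /Sphere wset_setD ?Ustar_sub_Bclos ?wset_Bclos. Qed.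

Lemma sum_wsimp_wset_Ustar : \sum_(x in G) wsimp x * wset (Ustar G x) = wset G.
Proof.
transitivity (\sum_(y in G) \sum_(x in G | x \subset y) wsimp x * wsimp y).
  rewrite (exchange_big_dep (mem G)) /=; last by move=> x y _ /andP [].
  apply: eq_bigr => x xG; rewrite /wset mulr_sumr.
  by apply: eq_bigl => y; rewrite inE xG.
apply: eq_bigr => y yG; rewrite -mulr_suml -[RHS]mul1r -(wset_faces yG).
by rewrite /wset; congr (_ * _); apply: eq_bigl => x; rewrite inE.
Qed.

Lemma sum_wsimp_wset_Sphere : \sum_(x in G) wsimp x * wset (Sphere G x) = 0.
Proof.
under eq_bigr => x xG do rewrite wset_Sphere // mulrBr mulr1.
by rewrite sumrB sum_wsimp_wset_Ustar subrr.
Qed.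

End Complex.

Theorem mainTheorem6 (T : finType) (G : {set {set T}}) (c : int) :
  is_complex G ->
  (forall x, x \in G -> wset (Sphere G x) = c) ->
  wset G = 0 \/ (forall x, x \in G -> wset (Sphere G x) = 0).
Proof.
move=> complexG sphereGc.
have : wset G * c = 0.
  rewrite -(sum_wsimp_wset_Sphere complexG) [wset G]/wset mulr_suml.
  by apply: eq_bigr => x xG; rewrite sphereGc.
move/eqP; rewrite mulf_eq0 => /orP [/eqP ->|/eqP c0]; first by left.
by right => x xG; rewrite sphereGc.
Qed.
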